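(* Let $n\geq2$. As $E$-modules, $\tilde{H}^\ast(BSO(2n))\cong\tilde{H}^\ast(BSO(2n-1))\oplus\tilde{H}^\ast(MSO_{2n})$, where $MSO_{2n}$ is the Thom space of the universal oriented $2n$-plane bundle over $BSO(2n)$.
   Context: Cohomology is with $\mathbb{Z}/2$ coefficients. $E=\mathbb{Z}/2\langle Q_0,Q_1\rangle$ is the exterior subalgebra of the mod 2 Steenrod algebra generated by the Milnor primitives $Q_0=Sq^1$ and $Q_1=Sq^3+Sq^2Sq^1$, acting on cohomology via Steenrod operations. $H^\ast(BSO(m))=\mathbb{Z}/2[\widehat{\omega_2},\dots,\widehat{\omega_m}]$ with $\widehat{\omega_i}$ the Stiefel–Whitney classes. *)

From HB Require Import structures.
From mathcomp Require Import all_boot all_order all_algebra.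
From mathcomp Require Import finmap.
From mathcomp Require Import mpoly.
Unset Printing Implicit Defensive.
Import GRing.Theory.
Local Open Scope ring_scope.

Notation F2 := 'F_2.

(* Algebraic model of H^*(BSO(m); Z/2) = Z/2[w_2, ..., w_m]:
   a polynomial ring in m-1 variables, variable i : 'I_(m.-1) standing
   for the Stiefel-Whitney class w_(i+2) (of cohomological degree i+2). *)
Definition HBSO (m : nat) := {mpoly F2[m.-1]}.

Definition sw (m j : nat) : {mpoly F2[m.-1]} :=
  if j == 0%N then 1
  else if j == 1%N then 0
  else oapp (fun i : 'I_(m.-1) => 'X_i) 0 (insub (j - 2)%N : option 'I_(m.-1)).

(* Wu formula: for k <= j,
   Sq^k w_j = \sum_(t=0..k) C(j-k+t-1, t) w_(k-t) w_(j+t), and Sq^k w_j = 0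
   for k > j.  The total square of w_j, as a polynomial in a formal
   variable T: Sq_T(w_j) = \sum_k Sq^k(w_j) T^k. *)
Definition wu (m j k : nat) : {mpoly F2[m.-1]} :=
  \sum_(t < k.+1) ('C(j - k + t - 1, t))%:R * sw m (k - t) * sw m (j + t).

Definition sqT_gen (m : nat) (i : 'I_(m.-1)) : {poly {mpoly F2[m.-1]}} :=
  \sum_(k < (i + 2).+1) (wu m (i + 2) k)%:P * 'X^k.

(* The total Steenrod square Sq_T = \sum_k T^k Sq^k : H^*(BSO(m)) ->
   H^*(BSO(m))[T], the unique ring morphism (Cartan formula, Sq^0 = id)
   extending the Wu formula on the generators. *)
Definition SqT (m : nat) (p : {mpoly F2[m.-1]}) : {poly {mpoly F2[m.-1]}} :=
  mmap (fun c : F2 => (c%:MP)%:P) (@sqT_gen m) p.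

Definition Sq (m k : nat) (p : {mpoly F2[m.-1]}) : {mpoly F2[m.-1]} :=
  (SqT m p)`_k.

Definition Q0 (m : nat) (p : {mpoly F2[m.-1]}) := Sq m 1 p.
Definition Q1 (m : nat) (p : {mpoly F2[m.-1]}) := Sq m 3 p + Sq m 2 (Sq m 1 p).

(* Reduced cohomology of MSO_m (Thom space of the universal oriented
   m-plane bundle): by the Thom isomorphism it is the free
   H^*(BSO(m))-module on the Thom class U (of degree m); an element x of
   {mpoly F2[m.-1]} represents U.x.  Steenrod squares are determined by
   Sq(U) = w U (Thom's definition of w) and the Cartan formula:
   Sq_T(U.x) = U.(w_T * Sq_T(x)), w_T = \sum_i w_i T^i. *)
Definition wT (m : nat) : {poly {mpoly F2[m.-1]}} :=
  \sum_(i < m.+1) (sw m i)%:P * 'X^i.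

Definition SqThom (m k : nat) (x : {mpoly F2[m.-1]}) : {mpoly F2[m.-1]} :=
  (wT m * SqT m x)`_k.

Definition Q0Thom (m : nat) (x : {mpoly F2[m.-1]}) := SqThom m 1 x.
Definition Q1Thom (m : nat) (x : {mpoly F2[m.-1]}) :=
  SqThom m 3 x + SqThom m 2 (SqThom m 1 x).

Definition wdeg (m : nat) (mono : 'X_{1..m.-1}) : nat :=
  (\sum_(i < m.-1) (i + 2) * mono i)%N.

Definition homogBSO (m d : nat) (p : {mpoly F2[m.-1]}) : Prop :=
  forall mono, mono \in msupp p -> wdeg m mono = d.

Definition homogThom (m d : nat) (x : {mpoly F2[m.-1]}) : Prop :=
  forall mono, mono \in msupp x -> (m + wdeg m mono)%N = d.

Definition reducedBSO (m : nat) (p : {mpoly F2[m.-1]}) : Prop :=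
  p@_0%MM = 0.

From HB Require Import structures.
From mathcomp Require Import all_boot all_order all_algebra.
From mathcomp Require Import finmap.
From mathcomp Require Import mpoly.
From mathcomp Require Import ring zify.
Import GRing.Theory.
Local Open Scope ring_scope.

(* Every x in H^*(BSO(2n)) = F2[w_2, ..., w_2n] is uniquely i(y) + w_2n z with
   y in F2[w_2, ..., w_2n-1] = H^*(BSO(2n-1)) and z arbitrary.  By the Wu
   formula Sq(w_2n) = w_2n w, so Sq(w_2n z) = w_2n (w Sq(z)): the summand
   w_2n H^*(BSO(2n)) is the Thom module U H^*(BSO(2n)).  On the other summand
   Q0 and Q1 are derivations with Q0 w_j = (j-1) w_(j+1) and
   Q1 w_j = w_3 w_j + c_j w_(j+3); the only terms leaving F2[w_2, ..., w_2n-1]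
   have coefficients 2n-2 and c_(2n-1), both even, so the inclusion i commutes
   with Q0 and Q1. *)

Lemma pchar2_mpolyF2 k : 2%N \in [pchar {mpoly F2[k]}].
Proof. exact: (rmorph_pchar (@mpolyC k F2) (pchar_Fp (erefl : prime 2))). Qed.

Lemma addrr_mpolyF2 k (x : {mpoly F2[k]}) : x + x = 0.
Proof. exact: addrr_pchar2 (pchar2_mpolyF2 k) x. Qed.

Lemma natr_mpolyF2_even k j : ~~ odd j -> (j%:R : {mpoly F2[k]}) = 0.
Proof.
move=> ej; rewrite -(odd_double_half j) (negbTE ej) add0n -mul2n natrM.
by rewrite (pcharf0 (pchar2_mpolyF2 k)) mul0r.
Qed.

Lemma even_bin3 a : ~~ odd a -> ~~ odd 'C(a, 3).
Proof.
move=> ea; rewrite -(odd_double_half a) (negbTE ea) add0n.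
elim: a./2 => [|b IH] //.
rewrite doubleS !binS !oddD bin1 odd_double (negbTE IH).
by case: (odd 'C(b.*2, 2)).
Qed.

Lemma mpoly_ring_ind n (R : nzRingType) (P : {mpoly R[n]} -> Prop) :
  (forall c, P c%:MP) -> (forall i, P 'X_i) ->
  (forall a b, P a -> P b -> P (a + b)) -> (forall a b, P a -> P b -> P (a * b)) ->
  forall x, P x.
Proof.
move=> PC PX PD PM x; elim/mpolyind: x => [|c mo p _ _ Pp]; first by rewrite -mpolyC0.
apply: (PD) => //; rewrite -mul_mpolyC mpolyXE_id; apply: (PM) => //.
apply: (big_ind P) => //; first by rewrite -mpolyC1.
move=> i _; elim: (mo i) => [|e Pe]; first by rewrite expr0 -mpolyC1.
by rewrite exprS; apply: (PM).
Qed.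

(* Unification against nested squares would unfold [Sq] into coefficients of
   large sums and diverge, so the computations use locked copies. *)
Definition Sql := locked Sq.
Lemma SqlE : Sq = Sql. Proof. exact: lock. Qed.

Definition Q1l m (x : {mpoly F2[m.-1]}) := Sql m 3 x + Sql m 2 (Sql m 1 x).
Lemma Q1lE m (x : {mpoly F2[m.-1]}) : Q1 m x = Q1l m x.
Proof. by rewrite /Q1 /Q1l SqlE. Qed.

Section Steenrod.
Variable m : nat.
Local Notation R := {mpoly F2[m.-1]}.

Lemma SqTM (a b : R) : SqT m (a * b) = SqT m a * SqT m b.
Proof. exact: (rmorphM (mmap (polyC \o @mpolyC _ F2) (@sqT_gen m))). Qed.

Lemma SqTD (a b : R) : SqT m (a + b) = SqT m a + SqT m b.
Proof. exact: (rmorphD (mmap (polyC \o @mpolyC _ F2) (@sqT_gen m))). Qed.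

Lemma SqTC (c : F2) : SqT m c%:MP = (c%:MP)%:P.
Proof. exact: (mmapC (@sqT_gen m) (polyC \o @mpolyC _ F2)). Qed.

Lemma SqTX (i : 'I_(m.-1)) : SqT m 'X_i = sqT_gen m i.
Proof.
by change (mmap (polyC \o @mpolyC _ F2) (@sqT_gen m) 'X_i = sqT_gen m i); rewrite mmapX mmap1U.
Qed.

Lemma SqD k (a b : R) : Sql m k (a + b) = Sql m k a + Sql m k b.
Proof. by rewrite -SqlE /Sq SqTD coefD. Qed.

Lemma SqC k (c : F2) : Sql m k (c%:MP : R) = if k == 0%N then c%:MP else 0.
Proof. by rewrite -SqlE /Sq SqTC coefC. Qed.

Lemma Sq0r k : Sql m k (0 : R) = 0.
Proof. by rewrite -mpolyC0 SqC mpolyC0 if_same. Qed.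

Lemma Sq_natl k j (a : R) : Sql m k (j%:R * a) = j%:R * Sql m k a.
Proof.
rewrite !mulr_natl; elim: j => [|j IH]; first by rewrite !mulr0n Sq0r.
by rewrite !mulrS SqD IH.
Qed.

Lemma SqM k (a b : R) : Sql m k (a * b) = \sum_(i < k.+1) Sql m i a * Sql m (k - i) b.
Proof. by rewrite -SqlE /Sq SqTM coefM. Qed.

Lemma SqX k (i : 'I_(m.-1)) : Sql m k 'X_i = if (k <= i + 2)%N then wu m (i + 2) k else 0.
Proof.
rewrite -SqlE /Sq SqTX /sqT_gen coef_sum.
under eq_bigr do rewrite coefCM coefXn.
case: leqP => [le_k|lt_k].
  rewrite (bigD1 (Ordinal (le_k : (k < (i + 2).+1)%N))) //= eqxx mulr1.
  rewrite big1 ?addr0 // => j /eqP neq_j; case: eqP => [e|]; rewrite ?mulr0 //.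
  by case: neq_j; apply: val_inj.
rewrite big1 // => j _; case: eqP => [e|]; rewrite ?mulr0 //.
by move: (ltn_ord j); rewrite -e ltnS leqNgt lt_k.
Qed.

Lemma swX (i : 'I_(m.-1)) : sw m (i + 2) = 'X_i.
Proof. by rewrite /sw addn2 /= subn2 /= insubT //= => lt_i; congr 'X__; apply: val_inj. Qed.

Lemma sw_eq0 j : (m.-1 + 2 <= j)%N -> sw m j = 0.
Proof.
move=> le_j; rewrite /sw ifN_eq; last by apply/eqP; lia.
by rewrite ifN_eq; [rewrite insubF //; apply/negbTE; lia | apply/eqP; lia].
Qed.

Lemma Sq_sw k j : (2 <= j)%N -> Sql m k (sw m j) = if (k <= j)%N then wu m j k else 0.
Proof.
move=> le2j; case: (ltnP (j - 2) m.-1) => [lt_j|ge_j].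
  have -> : j = ((Ordinal lt_j : nat) + 2)%N by rewrite /= subnK.
  by rewrite swX SqX.
rewrite sw_eq0 ?Sq0r; last by lia.
case: ifP => // _; rewrite /wu big1 // => t _.
by rewrite (@sw_eq0 (j + t)) ?mulr0 //; lia.
Qed.

Lemma Sq0_id (x : R) : Sql m 0 x = x.
Proof.
elim/mpoly_ring_ind: x => [c|i|a b Ea Eb|a b Ea Eb].
- by rewrite SqC.
- rewrite SqX leq0n -swX /wu big_ord_recl big_ord0.
  by rewrite /= bin0 mul1r mul1r addn0 addr0.
- by rewrite SqD Ea Eb.
- by rewrite SqM big_ord_recl big_ord0 addr0 /= Ea Eb.
Qed.

Lemma Sq1M (a b : R) : Sql m 1 (a * b) = Sql m 1 a * b + a * Sql m 1 b.
Proof. by rewrite SqM !big_ord_recl big_ord0 addr0 /= !Sq0_id addrC. Qed.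

Lemma Sq1_sw j : (2 <= j)%N -> Sql m 1 (sw m j) = (j - 1)%:R * sw m (j + 1).
Proof.
move=> le2j; rewrite Sq_sw // ifT ?(leq_trans _ le2j) // /wu !big_ord_recl big_ord0.
rewrite /= bin0 bin1 !mulr0 !mul0r add0r addr0 mulr1.
by have -> : (j - 1 + 1 - 1 = j - 1)%N by lia.
Qed.

Lemma Sq2_sw j : (2 <= j)%N ->
  Sql m 2 (sw m j) = sw m 2 * sw m j + 'C(j - 1, 2)%:R * sw m (j + 2).
Proof.
move=> le2j; rewrite Sq_sw // le2j /wu !big_ord_recl big_ord0 /=.
rewrite bin0 !mulr0 !mul0r addr0 mulr1 mul1r addn0 add0r.
by have -> : (j - 2 + 2 - 1 = j - 1)%N by lia.
Qed.

Lemma Sq3_sw j : (3 <= j)%N -> Sql m 3 (sw m j) =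
  sw m 3 * sw m j + (j - 3)%:R * sw m 2 * sw m (j + 1) + 'C(j - 1, 3)%:R * sw m (j + 3).
Proof.
move=> le3j; rewrite Sq_sw ?le3j ?(leq_trans _ le3j) // /wu !big_ord_recl big_ord0 /=.
rewrite bin0 bin1 !mulr0 !mul0r addr0 mulr1 mul1r addn0 add0r addrA.
have -> : (j - 3 + 3 - 1 = j - 1)%N by lia.
by have -> : (j - 3 + 1 - 1 = j - 3)%N by lia.
Qed.

Lemma Sq1_Sq1 (x : R) : Sql m 1 (Sql m 1 x) = 0.
Proof.
elim/mpoly_ring_ind: x => [c|i|a b Ea Eb|a b Ea Eb].
- by rewrite SqC Sq0r.
- rewrite -swX Sq1_sw ?leq_addl // Sq_natl Sq1_sw; last by lia.
  rewrite mulrA -natrM natr_mpolyF2_even ?mul0r //.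
  have -> : (i + 2 - 1 = i + 1)%N by lia.
  have -> : (i + 2 + 1 - 1 = i + 2)%N by lia.
  by rewrite oddM !oddD /=; case: (odd i).
- by rewrite !SqD Ea Eb addr0.
- by rewrite !Sq1M !SqD !Sq1M Ea Eb !mulr0 !mul0r addr0 add0r addrr_mpolyF2.
Qed.

Lemma Q1D (a b : R) : Q1l m (a + b) = Q1l m a + Q1l m b.
Proof. by rewrite /Q1l !SqD addrACA. Qed.

Lemma Q1M (a b : R) : Q1l m (a * b) = Q1l m a * b + a * Q1l m b.
Proof.
rewrite /Q1l Sq1M SqD !SqM !big_ord_recl !big_ord0 /= /bump /=.
rewrite !Sq0_id !Sq1_Sq1 !subn0 !add1n !mul0r !mulr0 !addr0.
set A1 := Sql m 1 a; set B1 := Sql m 1 b.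
transitivity ((Sql m 3 a + Sql m 2 A1) * b + a * (Sql m 3 b + Sql m 2 B1)
  + ((Sql m 2 a * B1 + Sql m 2 a * B1) + (A1 * Sql m 2 b + A1 * Sql m 2 b))); first ring.
by rewrite !addrr_mpolyF2 !addr0.
Qed.

Definition Q1_coef j := ('C(j - 1, 3) + (j - 1) * 'C(j, 2))%N.

Lemma Q1_sw j : (2 <= j)%N ->
  Q1l m (sw m j) = sw m 3 * sw m j + (Q1_coef j)%:R * sw m (j + 3).
Proof.
move=> le2j; rewrite /Q1l Sq1_sw // Sq_natl Sq2_sw; last by lia.
have -> : (j + 1 - 1 = j)%N by lia.
have -> : (j + 1 + 2 = j + 3)%N by lia.
case: (ltnP 2 j) => [lt2j|le_j2]; last first.
  have -> : j = 2%N by lia.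
  by rewrite Sq_sw //= add0r /Q1_coef /= !mul1r; ring.
have j3E : ((j - 3)%:R : R) = (j - 1)%:R.
  have -> : (j - 1 = (j - 3) + 2)%N by lia.
  by rewrite natrD (@natr_mpolyF2_even _ 2) // addr0.
rewrite Sq3_sw // /Q1_coef natrD natrM j3E.
set t := (j - 1)%:R * sw m 2 * sw m (j + 1).
transitivity (sw m 3 * sw m j + ((j - 1)%:R * 'C(j, 2)%:R + 'C(j - 1, 3)%:R) * sw m (j + 3)
  + (t + t)); first by rewrite /t; ring.
by rewrite addrr_mpolyF2 addr0 (addrC (_ * 'C(j, 2)%:R)).
Qed.

End Steenrod.

Section Split.
Variable p : nat.
Local Notation R := {mpoly F2[p.+1]}.
Local Notation R' := {mpoly F2[p]}.
Local Notation top := (ord_max : 'I_p.+1).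

Lemma SqT_top : SqT p.+2 'X_top = ('X_top)%:P * wT p.+2.
Proof.
have sw_top : sw p.+2 p.+2 = 'X_top by rewrite -(swX p.+2 top) /= addn2.
rewrite SqTX /sqT_gen /wT /= addn2 mulr_sumr; apply: eq_bigr => k _.
have -> : wu p.+2 p.+2 k = sw p.+2 k * sw p.+2 p.+2.
  rewrite /wu big_ord_recl /= bin0 mul1r subn0 addn0 big1 ?addr0 // => t _.
  by rewrite (@sw_eq0 p.+2 (p.+2 + bump 0 t)) ?mulr0 //= /bump; lia.
by rewrite sw_top polyCM [RHS]mulrA (mulrC ('X_top)%:P).
Qed.

Lemma Sq_top k (z : R) : Sql p.+2 k ('X_top * z) = 'X_top * SqThom p.+2 k z.
Proof. by rewrite -SqlE /Sq SqTM SqT_top -mulrA coefCM. Qed.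

Lemma Q1_top (z : R) : Q1l p.+2 ('X_top * z) = 'X_top * Q1Thom p.+2 z.
Proof. by rewrite /Q1l /Q1Thom !Sq_top mulrDr. Qed.

Definition joinw (yz : R' * R) : R := mwiden yz.1 + 'X_top * yz.2.

Lemma joinw_linear (a : F2) u v :
  joinw (a *: u.1 + v.1, a *: u.2 + v.2) = a *: joinw u + joinw v.
Proof. by rewrite /joinw /= mwidenD mwidenZ mulrDr scalerDr -scalerAr addrACA. Qed.

Lemma joinw_coef_widen yz (mo : 'X_{1..p}) : (joinw yz)@_(mnmwiden mo) = yz.1@_mo.
Proof.
rewrite /joinw mcoeffD mwiden_mnmwiden -[RHS]addr0; congr (_ + _); apply/eqP.
rewrite mcoeff_eq0 mulrC (perm_mem (msuppMX _ U_(top))); apply/negP => /mapP [mo' _ e].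
by move: (congr1 (fun mm : 'X_{1..p.+1} => mm top) e); rewrite mnmwiden_ordmax mnmDE mnm1E eqxx.
Qed.

Lemma joinw_coef_top yz (mo : 'X_{1..p.+1}) : (joinw yz)@_(U_(top) + mo)%MM = yz.2@_mo.
Proof.
rewrite /joinw mcoeffD mulrC mcoeffMX (mwidenE (k := msize yz.1)) // raddf_sum /=.
rewrite big1 ?add0r // => mo' _; rewrite mcoeffZ mcoeffX; case: eqP => [e|]; last by rewrite mulr0.
by move: (congr1 (fun mm : 'X_{1..p.+1} => mm top) e); rewrite mnmwiden_ordmax mnmDE mnm1E eqxx.
Qed.

Lemma joinw_inj : injective joinw.
Proof.
move=> [y1 z1] [y2 z2] e; congr (_, _); apply/mpolyP => mo.
  by rewrite -(joinw_coef_widen (y1, z1)) -(joinw_coef_widen (y2, z2)) e.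
by rewrite -(joinw_coef_top (y1, z1)) -(joinw_coef_top (y2, z2)) e.
Qed.

Lemma joinw_surj x : exists yz, joinw yz == x.
Proof.
elim/mpolyind: x => [|c mo x _ _ [[y z] /eqP <-]].
  by exists (0, 0); rewrite /joinw mwiden0 mulr0 addr0.
have [mo_top0|mo_top] := eqVneq (mo top) 0%N.
  pose mo' := [multinom mo (widen_ord (leqnSn p) i) | i < p].
  have mo'E : mnmwiden mo' = mo.
    apply/mnmP => i; case: (ltnP i p) => lt_ip.
      have -> : i = widen_ord (leqnSn p) (Ordinal lt_ip) by apply: val_inj.
      by rewrite mnmwiden_widen mnmE.
    have -> : i = top by apply: val_inj => /=; move: (ltn_ord i); lia.
    by rewrite mnmwiden_ordmax mo_top0.
  by exists (c *: 'X_[mo'] + y, z); rewrite /joinw /= mwidenD mwidenZ mwidenX mo'E addrA.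
have le_top : (U_(top) <= mo)%MM.
  by apply/mnm_lepP => i; rewrite mnm1E; case: eqP => [<-|] //; rewrite lt0n.
exists (y, c *: 'X_[mo - U_(top)] + z).
by rewrite /joinw /= mulrDr addrCA -scalerAr -mpolyXD addmC submK.
Qed.

Definition splitw (x : R) : R' * R := xchoose (joinw_surj x).

Lemma splitwK : cancel splitw joinw.
Proof. by move=> x; apply/eqP/(xchooseP (joinw_surj x)). Qed.

Lemma joinwK : cancel joinw splitw.
Proof. by move=> yz; apply: joinw_inj; rewrite splitwK. Qed.

Lemma splitw_linear (a : F2) x y :
  splitw (a *: x + y) = (a *: (splitw x).1 + (splitw y).1, a *: (splitw x).2 + (splitw y).2).
Proof. by apply: joinw_inj; rewrite joinw_linear !splitwK. Qed.

Lemma splitw_coef_widen x mo : (splitw x).1@_mo = x@_(mnmwiden mo).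
Proof. by rewrite -{2}(splitwK x) joinw_coef_widen. Qed.

Lemma splitw_coef_top x mo : (splitw x).2@_mo = x@_(U_(top) + mo)%MM.
Proof. by rewrite -{2}(splitwK x) joinw_coef_top. Qed.

Lemma splitw_reduced x : reducedBSO p.+2 x -> reducedBSO p.+1 (splitw x).1.
Proof. by rewrite /reducedBSO splitw_coef_widen mnmwiden0. Qed.

Lemma joinw_reduced y z : reducedBSO p.+1 y -> reducedBSO p.+2 (joinw (y, z)).
Proof. by rewrite /reducedBSO -mnmwiden0 joinw_coef_widen. Qed.

Lemma wdeg_widen (mo : 'X_{1..p}) : wdeg p.+2 (mnmwiden mo) = wdeg p.+1 mo.
Proof.
rewrite /wdeg big_ord_recr /= mnmwiden_ordmax muln0 addn0.
by apply: eq_bigr => i _; rewrite mnmwiden_widen.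
Qed.

Lemma wdeg_top (mo : 'X_{1..p.+1}) : wdeg p.+2 (U_(top) + mo)%MM = (p.+2 + wdeg p.+2 mo)%N.
Proof.
rewrite /wdeg; under eq_bigr do rewrite mnmDE mulnDr.
rewrite big_split /=; congr (_ + _)%N.
rewrite (bigD1 top) //= mnm1E eqxx muln1 big1 ?addn0 ?addn2 // => i /negbTE neq_i.
by rewrite mnm1E eq_sym neq_i muln0.
Qed.

Lemma splitw_homog d x : homogBSO p.+2 d x ->
  homogBSO p.+1 d (splitw x).1 /\ homogThom p.+2 d (splitw x).2.
Proof.
move=> homx; split=> mo; rewrite mcoeff_msupp.
  by rewrite splitw_coef_widen -mcoeff_msupp -wdeg_widen => /homx.
by rewrite splitw_coef_top -mcoeff_msupp -wdeg_top => /homx.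
Qed.

Lemma mwiden_sw j : j != p.+2 -> mwiden (sw p.+1 j) = sw p.+2 j.
Proof.
move=> neq_j; case: (ltnP j 2) => [|le2j].
  by case: j neq_j => [|[|j]] // _ _; rewrite ?mwiden1 ?mwiden0.
case: (ltnP (j - 2) p) => [lt_j|ge_j]; last by rewrite !sw_eq0 ?mwiden0 //=; lia.
have -> : j = ((Ordinal lt_j : nat) + 2)%N by rewrite /= subnK.
rewrite (swX p.+1 (Ordinal lt_j)) mwidenX mnmwiden1.
exact: (esym (swX p.+2 (widen_ord (leqnSn p) (Ordinal lt_j)))).
Qed.

Hypothesis p_even : ~~ odd p.

Lemma mwiden_Sq1 (y : R') : Sql p.+2 1 (mwiden y) = mwiden (Sql p.+1 1 y).
Proof.
elim/mpoly_ring_ind: y => [c|i|a b Ea Eb|a b Ea Eb].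
- by rewrite mwidenC !SqC mwiden0.
- rewrite -(swX p.+1 i) mwiden_sw; last by case: i => i /= lt_ip; apply/eqP; lia.
  rewrite !Sq1_sw ?leq_addl // mwidenM rmorph_nat.
  have [top_i|] := eqVneq (i + 2 + 1)%N p.+2; last by move/mwiden_sw ->.
  have -> : (i + 2 - 1 = p)%N by lia.
  by rewrite !natr_mpolyF2_even // !mul0r.
- by rewrite mwidenD !SqD mwidenD -Ea -Eb.
- by rewrite mwidenM !Sq1M mwidenD !mwidenM -Ea -Eb.
Qed.

Lemma mwiden_Q1 (y : R') : Q1l p.+2 (mwiden y) = mwiden (Q1l p.+1 y).
Proof.
have p_neq1 : p != 1%N by apply: contraNneq p_even => ->.
elim/mpoly_ring_ind: y => [c|i|a b Ea Eb|a b Ea Eb].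
- by rewrite mwidenC /Q1l !SqC ?Sq0r ?addr0 mwiden0.
- case: i => i lt_ip.
  rewrite -(swX p.+1 (Ordinal lt_ip)) /= mwiden_sw; last by apply/eqP; lia.
  rewrite !Q1_sw ?leq_addl // mwidenD !mwidenM rmorph_nat.
  rewrite (mwiden_sw 3) ?(mwiden_sw (i + 2)); try by apply/eqP; lia.
  have [top_i|] := eqVneq (i + 2 + 3)%N p.+2; last by move/mwiden_sw ->.
  rewrite natr_mpolyF2_even ?mul0r //.
  have -> : (i + 2 = (p - 2) + 1)%N by lia.
  have p2_even : ~~ odd (p - 2) by rewrite oddB ?(negbTE p_even) //; lia.
  rewrite /Q1_coef addnK oddD oddM !negb_add.
  by rewrite (negbTE (even_bin3 _ p2_even)) (negbTE p2_even).
- by rewrite mwidenD !Q1D mwidenD -Ea -Eb.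
- by rewrite mwidenM !Q1M mwidenD !mwidenM -Ea -Eb.
Qed.

Lemma splitw_Q0 x : splitw (Q0 p.+2 x) = (Q0 p.+1 (splitw x).1, Q0Thom p.+2 (splitw x).2).
Proof.
move: (splitwK x); case: (splitw x) => y z <-.
rewrite /Q0 /Q0Thom SqlE /joinw /= SqD Sq_top mwiden_Sq1.
exact: (joinwK (Sql p.+1 1 y, SqThom p.+2 1 z)).
Qed.

Lemma splitw_Q1 x : splitw (Q1 p.+2 x) = (Q1 p.+1 (splitw x).1, Q1Thom p.+2 (splitw x).2).
Proof.
move: (splitwK x); case: (splitw x) => y z <-.
rewrite !Q1lE /joinw /= Q1D Q1_top mwiden_Q1.
exact: (joinwK (Q1l p.+1 y, Q1Thom p.+2 z)).
Qed.

End Split.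

Theorem lemma2 (n : nat) (hn : (2 <= n)%N) :
  exists f : {mpoly F2[(2 * n).-1]} ->
             {mpoly F2[(2 * n - 1).-1]} * {mpoly F2[(2 * n).-1]},
    (* F2-linear *)
        (forall (a : F2) x y, f (a *: x + y) = (a *: (f x).1 + (f y).1, a *: (f x).2 + (f y).2)) /\
        (* maps reduced classes to (reduced, anything) *)
        (forall x, reducedBSO (2 * n) x -> reducedBSO (2 * n - 1) (f x).1) /\
        (* injective on reduced classes *)
        (forall x y, reducedBSO (2 * n) x -> reducedBSO (2 * n) y -> f x = f y -> x = y) /\
        (* surjective onto ~H(BSO(2n-1)) (+) ~H(MSO_2n) *)
        (forall y z, reducedBSO (2 * n - 1) y ->
           exists2 x, reducedBSO (2 * n) x & f x = (y, z)) /\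
        (* degree preserving *)
        (forall d x, reducedBSO (2 * n) x -> homogBSO (2 * n) d x ->
           homogBSO (2 * n - 1) d (f x).1 /\ homogThom (2 * n) d (f x).2) /\
        (* commutes with Q0 *)
        (forall x, reducedBSO (2 * n) x ->
           f (Q0 (2 * n) x) = (Q0 (2 * n - 1) (f x).1, Q0Thom (2 * n) (f x).2)) /\
        (* commutes with Q1 *)
        (forall x, reducedBSO (2 * n) x ->
           f (Q1 (2 * n) x) = (Q1 (2 * n - 1) (f x).1, Q1Thom (2 * n) (f x).2)).
Proof.
have [p p_even n_eq] : exists2 p, ~~ odd p & (2 * n = p.+2)%N.
  by exists (2 * n - 2)%N; [rewrite oddB ?oddM //; lia | lia].
rewrite n_eq subSS subn0; exists (splitw p).
split; first exact: splitw_linear.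
split; first exact: splitw_reduced.
split; first by move=> x y _ _; apply: (can_inj (splitwK p)).
split.
  move=> y z red_y; exists (joinw p (y, z)); first exact: joinw_reduced.
  exact: joinwK.
split; first by move=> d x _; apply: splitw_homog.
by split=> x _; [apply: splitw_Q0 | apply: splitw_Q1].
Qed.
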